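(* Let $w$ be a word of odd rank and $c$ a legal point of $\mathcal C_w$ whose intersection sequence $T(c)$ is simple. Then the polygonal $\mathcal G(c)$ is regular.
   Context: For real parameters $\mathrm a,\mathrm b$, the map $F:\mathbb R^2\to\mathbb R^2$ is $F(x,y)=(\mathrm a x-y,x)$ if $x>0$ or ($x=0$ and $y\le0$), and $F(x,y)=(\mathrm b x-y,x)$ otherwise. Letter $a$ is assigned to points in the open right half-plane or on the negative $y$-axis, and $b$ otherwise. Boundary rays are the $y$ semi-axes $L^\pm$. For a word $w=w_0\cdots w_{n-1}$: $Q_{-1}=-1$, $Q_0=0$, $Q_{t+1}=w_tQ_t-Q_{t-1}$ (letters specialised to $\mathrm a,\mathrm b$). The rank is $1+|w|_{ab}+|w|_{ba}$. For odd rank, with $\mathbf k=\lfloor n/2\rfloor$, $C_w=Q_{\mathbf k+1}-Q_{\mathbf k}$ ($n$ odd) or $Q_{\mathbf k+1}-Q_{\mathbf k-1}$ ($n$ even), and $\mathcal C_w=\{C_w=0\}$. A legal point of $\mathcal C_w$ is a parameter pair at which $w$ is equivalent to the symbolic word of the actual $F$-orbit segment between the two boundary rays. Equivalence allows changing letters at positions where the orbit lies on a boundary ray; equivalence ''at $c$'' refers to this orbit at parameters $c$. Intersection sequence: $T(c)=(t_1,t_2,\dots)$, the increasing list of $t$ with $0<t<n$ and $Q_t(c)=0$. $T(c)$ is simple if it is empty or if the word $w_0\cdots w_{t_1-1}$ is equivalent at $c$ to a word of rank $1$. Polygonal: let $\gamma_t=(Q_t^2,0)$ if $w_t=a$ and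 $\gamma_t=(0,Q_t^2)$ if $w_t=b$, and $\Gamma_t=\sum_{i=0}^t\gamma_i$ for $t=0,\dots,n-1$. $\mathcal G(c)$ is the polygonal line through $\Gamma_0(c),\dots,\Gamma_{n-1}(c)$. An intersection point of $\mathcal G$ is a $\Gamma_t$ with $\Gamma_t=\Gamma_{t-1}$. The median of $\mathcal G$ is the segment $[\Gamma_0,\Gamma_{n-1}]$. $\mathcal G$ is regular if no intersection point lies on its median. *)

From HB Require Import structures.
From mathcomp Require Import all_boot all_order all_algebra.
From mathcomp Require Import reals.
Set Implicit Arguments. Unset Strict Implicit. Unset Printing Implicit Defensive.
Import Order.TTheory GRing.Theory Num.Theory.
Local Open Scope ring_scope.

Inductive letter := La | Lb.

Definition letter_eqb (u v : letter) : bool :=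
  match u, v with La, La | Lb, Lb => true | _, _ => false end.
Lemma letter_eqP : Equality.axiom letter_eqb.
Proof. by case; case; constructor. Qed.
HB.instance Definition _ := hasDecEq.Build letter letter_eqP.

Definition word := seq letter.

Section Defs.
Variable R : realType.

Definition spec (c : R * R) (l : letter) : R :=
  match l with La => c.1 | Lb => c.2 end.

Definition in_a (p : R * R) : bool := (0 < p.1) || ((p.1 == 0) && (p.2 <= 0)).
Definition letter_of (p : R * R) : letter := if in_a p then La else Lb.
Definition Fmap (c : R * R) (p : R * R) : R * R :=
  (spec c (letter_of p) * p.1 - p.2, p.1).

Fixpoint orbit (c : R * R) (t : nat) : R * R :=
  match t with 0 => (0, -1) | t'.+1 => Fmap c (orbit c t') end.

Definition on_boundary (p : R * R) : Prop := p.1 = 0.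
Definition on_Lplus (p : R * R) : Prop := p.1 = 0 /\ 0 <= p.2.

Definition itinerary (c : R * R) (n : nat) : word :=
  mkseq (fun t => letter_of (orbit c t)) n.

Definition equiv_at (c : R * R) (u v : word) : Prop :=
  size u = size v /\
  forall t, (t < size u)%N -> nth La u t <> nth La v t ->
    on_boundary (orbit c t).

Fixpoint Qp (w : word) (c : R * R) (t : nat) : R * R :=
  match t with
  | 0 => (-1, 0)
  | t'.+1 => let q := Qp w c t' in
             (q.2, spec c (nth La w t') * q.2 - q.1)
  end.
(** Q t = Q_t, Qprev t = Q_{t-1} (so Qprev 0 = Q_{-1} = -1). *)
Definition Q (w : word) (c : R * R) (t : nat) : R := (Qp w c t).2.
Definition Qprev (w : word) (c : R * R) (t : nat) : R := (Qp w c t).1.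

Definition rank (w : word) : nat :=
  (1 + \sum_(0 <= i < (size w).-1) (nth La w i != nth La w i.+1))%N.

Definition Cw (w : word) (c : R * R) : R :=
  let n := size w in let k := n./2 in
  if odd n then Q w c k.+1 - Q w c k else Q w c k.+1 - Qprev w c k.

Definition legal (w : word) (c : R * R) : Prop :=
  Cw w c = 0 /\
  on_Lplus (orbit c (size w)) /\
  equiv_at c w (itinerary c (size w)).

Definition Tseq (w : word) (c : R * R) : seq nat :=
  [seq t <- iota 1 (size w).-1 | Q w c t == 0].

Definition T_simple (w : word) (c : R * R) : Prop :=
  Tseq w c = [::] \/
  exists u : word, rank u = 1%N /\
    equiv_at c (take (head 0%N (Tseq w c)) w) u.

Definition Gamma (w : word) (c : R * R) (t : nat) : R * R :=
  (\sum_(0 <= i < t.+1) (if nth La w i == La then Q w c i ^+ 2 else 0),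
   \sum_(0 <= i < t.+1) (if nth La w i == Lb then Q w c i ^+ 2 else 0)).

Definition on_segment (P A B : R * R) : Prop :=
  exists s : R, 0 <= s <= 1 /\
    P.1 = A.1 + s * (B.1 - A.1) /\ P.2 = A.2 + s * (B.2 - A.2).

Definition regular (w : word) (c : R * R) : Prop :=
  forall t, (0 < t < size w)%N -> Gamma w c t = Gamma w c t.-1 ->
    ~ on_segment (Gamma w c t) (Gamma w c 0) (Gamma w c (size w).-1).

End Defs.

From Pilot Require Import Defs.
From mathcomp Require Import all_boot all_order all_algebra reals.
From mathcomp Require Import ring zify.
Set Implicit Arguments. Unset Strict Implicit. Unset Printing Implicit Defensive.
Import Order.TTheory GRing.Theory Num.Theory.
Local Open Scope ring_scope.

(* Legality makes w the itinerary of the orbit of (0,-1) up to boundary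
   letters, so Q_t is the abscissa of the t-th orbit point and the polygonal
   is the sequence of partial sums of its squared abscissae, put on the a- or
   b-side according to the sign (Gamma_orbit). Its first vertex is the origin,
   so an intersection point Gamma_t on the median is collinear with the last
   vertex: their cross product vanishes (on_segment_origin).  Simplicity of
   T(c) forces the orbit to stay in the open right half-plane up to the first
   intersection time p, where it reaches L^+; the next return p2 to the axis
   is on L^- or on L^+.  Since F is positively homogeneous, in both cases
   the orbit repeats itself up to a geometric rescaling (orbit_rescaled), so
   the vertices at intersection times are explicit geometric sums, and the
   cross product is a product of positive quantities (return_to_Lminus,
   return_to_Lplus). *)

Section Homogeneity.
Variables (R : realType) (c : R * R).
Local Notation orb := (Defs.orbit c).

Definition scale (k : R) (u : R * R) : R * R := (k * u.1, k * u.2).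

Lemma in_a_scale (k : R) (u : R * R) : 0 < k -> in_a (scale k u) = in_a u.
Proof.
by move=> k0; rewrite /in_a /= pmulr_rgt0 // mulf_eq0 (gt_eqF k0) pmulr_rle0.
Qed.

(* F is positively homogeneous: the half-planes are cones. *)
Lemma Fmap_scale (k : R) (u : R * R) :
  0 < k -> Fmap c (scale k u) = scale k (Fmap c u).
Proof.
by move=> k0; rewrite /Fmap /letter_of in_a_scale // /scale /=; congr (_, _); ring.
Qed.

Lemma orbit_shift (z z' : nat) (k : R) : 0 < k ->
  orb z = scale k (orb z') -> forall s, orb (z + s) = scale k (orb (z' + s)).
Proof.
move=> k0 Hz; elim=> [|s IH]; first by rewrite !addn0.
by rewrite !addnS /= IH Fmap_scale.
Qed.

Lemma orbit_rescaled (z0 T : nat) (k : R) : 0 < k ->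
  orb (z0 + T) = scale k (orb z0) ->
  forall i s, orb (z0 + i * T + s) = scale (k ^+ i) (orb (z0 + s)).
Proof.
move=> k0 HT; elim=> [|i IH] s.
  by rewrite mul0n addn0 expr0 /scale !mul1r; case: (orb _).
have -> : (z0 + i.+1 * T + s = (z0 + T) + (i * T + s))%N by rewrite mulSn; lia.
by rewrite (orbit_shift k0 HT) addnA IH /scale /= exprS; congr (_, _); ring.
Qed.

(* F is invertible and fixes the origin, so the orbit of (0,-1) avoids it. *)
Lemma orbit_neq0 (t : nat) : orb t <> (0, 0).
Proof.
elim: t => [|t IH] /=; first by case=> /eqP; rewrite oppr_eq0 oner_eq0.
rewrite /Fmap; case: (orb t) IH => u1 u2 /= IH [] H1 H2.
by apply: IH; rewrite H2 mulr0 sub0r in H1; rewrite H2 -[u2]opprK H1 oppr0.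
Qed.

Lemma orbit1 : orb 1 = (1, 0).
Proof.
by rewrite /= /Fmap /letter_of /in_a /= ltxx eqxx lerN10 /= mulr0 sub0r opprK.
Qed.

End Homogeneity.

Section BlockSums.
Variable R : numDomainType.
Implicit Types (f : nat -> R) (rho : R).

Definition bsum f (s l : nat) : R := \sum_(0 <= i < l) f (s + i)%N.

Lemma bsum0 f s : bsum f s 0 = 0.
Proof. by rewrite /bsum big_geq. Qed.

Lemma bsumS f s l : bsum f s l.+1 = bsum f s l + f (s + l)%N.
Proof. by rewrite /bsum big_nat_recr. Qed.

Lemma bsum_cat f s l1 l2 : bsum f s (l1 + l2) = bsum f s l1 + bsum f (s + l1) l2.
Proof.
elim: l2 => [|l2 IH]; first by rewrite addn0 bsum0 addr0.
by rewrite addnS !bsumS IH addnA addrA.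
Qed.

Lemma bsum_ge0 f s l : (forall i, 0 <= f i) -> 0 <= bsum f s l.
Proof. by move=> f_ge0; apply: sumr_ge0 => i _. Qed.

Lemma bsum_ge_term f s l j :
  (forall i, 0 <= f i) -> (j < l)%N -> f (s + j)%N <= bsum f s l.
Proof.
move=> f_ge0 jl; rewrite -(subnKC jl) bsum_cat addnS bsumS.
by rewrite addrAC lerDr addr_ge0 // bsum_ge0.
Qed.

Definition geom rho (i : nat) : R := \sum_(j < i) rho ^+ j.

Lemma geom_recl rho i : geom rho i.+1 = 1 + rho * geom rho i.
Proof.
rewrite /geom big_ord_recl expr0 mulr_sumr; congr (_ + _).
by apply: eq_bigr => j _; rewrite exprS.
Qed.

Lemma geom_split rho a b : geom rho (a + b) = geom rho b + rho ^+ b * geom rho a.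
Proof.
elim: a => [|a IH]; first by rewrite add0n /geom big_ord0 mulr0 addr0.
by rewrite addSn /geom !big_ord_recr /= -!/(geom _ _) IH mulrDr -exprD addnC addrA.
Qed.

Lemma geom_gt0 rho i : 0 < rho -> (0 < i)%N -> 0 < geom rho i.
Proof.
move=> rho0; case: i => // i _; rewrite /geom big_ord_recr /=.
by rewrite ltr_wpDl ?exprn_gt0 //; apply: sumr_ge0 => j _; rewrite exprn_ge0 ?ltW.
Qed.

Lemma bsum_period f (z0 T : nat) rho :
  (forall i s, f (z0 + i * T + s)%N = rho ^+ i * f (z0 + s)%N) ->
  forall i s, bsum f 0 (z0 + i * T + s) =
     bsum f 0 z0 + geom rho i * bsum f z0 T + rho ^+ i * bsum f z0 s.
Proof.
move=> Hf i s; rewrite -addnA bsum_cat add0n -addrA; congr (_ + _).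
elim: i => [|i IH]; first by rewrite mul0n add0n /geom big_ord0 mul0r add0r mul1r.
have shiftT : bsum f (z0 + T) (i * T + s) = rho * bsum f z0 (i * T + s).
  rewrite /bsum mulr_sumr; apply: eq_bigr => m _.
  by have := Hf 1%N m; rewrite mul1n expr1.
by rewrite mulSn -addnA bsum_cat shiftT IH geom_recl exprS; ring.
Qed.

End BlockSums.

Section OrbitPolygonal.
Variables (R : realType) (c : R * R).
Local Notation orb := (Defs.orbit c).
Local Notation xcoord t := (orb t).1.

(* Increments of the polygonal when the letters are read off the orbit
   itself: the squared abscissa goes to the a-side in the open right
   half-plane and to the b-side otherwise. *)
Definition weight_a (u : R * R) : R := if 0 < u.1 then u.1 ^+ 2 else 0.
Definition weight_b (u : R * R) : R := if 0 < u.1 then 0 else u.1 ^+ 2.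
Definition wa (t : nat) : R := weight_a (orb t).
Definition wb (t : nat) : R := weight_b (orb t).

(* The vertex Gamma_(t-1) of the polygonal of the orbit, and the cross
   product detecting collinearity with the origin. *)
Definition vertex (t : nat) : R * R := (bsum wa 0 t, bsum wb 0 t).
Definition cross (u v : R * R) : R := u.1 * v.2 - u.2 * v.1.

Lemma wa_ge0 t : 0 <= wa t.
Proof. by rewrite /wa /weight_a; case: ifP => _ //; rewrite sqr_ge0. Qed.

Lemma wb_ge0 t : 0 <= wb t.
Proof. by rewrite /wb /weight_b; case: ifP => _ //; rewrite sqr_ge0. Qed.

Lemma weights_rescaled (z0 T : nat) (k : R) : 0 < k ->
  orb (z0 + T) = scale k (orb z0) -> forall i s,
  wa (z0 + i * T + s) = (k ^+ 2) ^+ i * wa (z0 + s) /\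
  wb (z0 + i * T + s) = (k ^+ 2) ^+ i * wb (z0 + s).
Proof.
move=> k0 HT i s; rewrite /wa /wb (orbit_rescaled k0 HT) /weight_a /weight_b /=.
rewrite pmulr_rgt0 ?exprn_gt0 //.
by case: ifP => _; rewrite ?mulr0 // exprMn -!exprM mulnC.
Qed.

Lemma vertex_rescaled (z0 T : nat) (k : R) : 0 < k ->
  orb (z0 + T) = scale k (orb z0) -> forall i s,
  vertex (z0 + i * T + s) =
    (bsum wa 0 z0 + geom (k ^+ 2) i * bsum wa z0 T + (k ^+ 2) ^+ i * bsum wa z0 s,
     bsum wb 0 z0 + geom (k ^+ 2) i * bsum wb z0 T + (k ^+ 2) ^+ i * bsum wb z0 s).
Proof.
move=> k0 HT i s; have Hw := weights_rescaled k0 HT.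
by rewrite /vertex !(@bsum_period _ _ z0 T (k ^+ 2)) // => j m; have [] := Hw j m.
Qed.

Lemma on_segment_origin (P B : R * R) : on_segment P (0, 0) B -> cross P B = 0.
Proof.
by case=> s [_ [e1 e2]]; rewrite /cross e1 e2 /= !subr0 !add0r; ring.
Qed.

Definition follows (w : word) : Prop :=
  forall t, (t < size w)%N -> nth La w t <> letter_of (orb t) -> xcoord t = 0.

Lemma legal_follows (w : word) : legal w c -> follows w.
Proof.
case=> _ [_ [_ Heqv]] t ht hne; apply: (Heqv t ht).
by rewrite /itinerary nth_mkseq.
Qed.

Lemma letter_off_axis (u : R * R) : u.1 != 0 -> (letter_of u == La) = (0 < u.1).
Proof. by move=> h; rewrite /letter_of /in_a (negbTE h) orbF; case: ifP. Qed.

Lemma Qp_orbit (w : word) : follows w ->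
  forall t, (t <= size w)%N -> Qp w c t = ((orb t).2, xcoord t).
Proof.
move=> Hw; elim=> [|t IH] ht //=; rewrite IH 1?ltnW //= /Fmap /=; congr (_, _).
case: (eqVneq (nth La w t) (letter_of (orb t))) => [-> //|/eqP hne].
by rewrite (Hw t ht hne) !mulr0.
Qed.

Lemma Q_orbit (w : word) : follows w ->
  forall t, (t <= size w)%N -> Q w c t = xcoord t.
Proof. by move=> Hw t ht; rewrite /Q Qp_orbit. Qed.

Lemma Gamma_orbit (w : word) : follows w ->
  forall t, (t < size w)%N -> Gamma w c t = vertex t.+1.
Proof.
move=> Hw t ht; rewrite /Gamma /vertex /bsum.
have letter_i : forall i, (i < t.+1)%N -> xcoord i != 0 ->
    (nth La w i == La) = (0 < xcoord i).
  move=> i hi hx; rewrite -letter_off_axis //.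
  case: (eqVneq (nth La w i) (letter_of (orb i))) => [->//|/eqP hne].
  by rewrite (Hw i (leq_trans hi ht) hne) eqxx in hx.
congr (_, _); apply: eq_big_nat => i /andP[_ hi];
  rewrite add0n /wa /wb /weight_a /weight_b (Q_orbit Hw (ltnW (leq_trans hi ht)));
  case: (eqVneq (xcoord i) 0) => [->|hx]; rewrite ?ltxx ?expr0n ?if_same //.
  by rewrite letter_i.
by rewrite -letter_i //; case: (nth La w i).
Qed.

End OrbitPolygonal.

Lemma zero_residue (R : realType) (c : R * R) (z0 T m : nat) (k : R) :
  0 < k -> (0 < T)%N -> Defs.orbit c (z0 + T) = scale k (Defs.orbit c z0) ->
  (z0 <= m)%N -> (Defs.orbit c m).1 = 0 ->
  m = (z0 + (m - z0) %/ T * T + (m - z0) %% T)%N /\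
  (Defs.orbit c (z0 + (m - z0) %% T)).1 = 0.
Proof.
move=> k0 T0 HT zm xm.
have em : m = (z0 + (m - z0) %/ T * T + (m - z0) %% T)%N.
  by rewrite -addnA -divn_eq subnKC.
split=> //; move: xm; rewrite {1}em (orbit_rescaled k0 HT) /= => /eqP.
by rewrite mulf_eq0 expf_eq0 (gt_eqF k0) andbF => /eqP.
Qed.

Section FirstPassage.
Variables (R : realType) (c : R * R) (p : nat).
Local Notation orb := (Defs.orbit c).
Local Notation xcoord t := (orb t).1.

Hypothesis p_gt1 : (1 < p)%N.
Hypothesis x_pos : forall i, (0 < i < p)%N -> 0 < xcoord i.
Hypothesis x_p : xcoord p = 0.

Lemma first_passage : exists2 lam : R, 0 < lam &
  orb p = (0, lam) /\ orb p.+1 = (- lam, 0).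
Proof.
have lam0 : 0 < xcoord p.-1 by apply: x_pos; lia.
have op : orb p = (0, xcoord p.-1).
  by rewrite -x_p -(prednK (ltnW p_gt1)) /= /Fmap.
exists (xcoord p.-1) => //; split=> //.
rewrite /= op /Fmap /letter_of /in_a /= ltxx eqxx /= leNgt lam0 /=.
by rewrite mulr0 sub0r.
Qed.

Lemma wb_after_first_passage : 0 < wb c p.+1.
Proof.
have [lam lam0 [_ op1]] := first_passage.
by rewrite /wb /weight_b op1 /= oppr_gt0 (lt_gtF lam0) sqrrN exprn_gt0.
Qed.

Lemma bsum_wb_first_passage : bsum (wb c) 0 p = 0.
Proof.
rewrite /bsum big_nat_cond big1 // => i /andP[/andP[_ hi] _].
rewrite add0n /wb /weight_b; case: (posnP i) => [->|i0].
  by rewrite /= ltxx expr0n.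
by rewrite x_pos // i0.
Qed.

Lemma bsum_wa_first_passage : 0 < bsum (wa c) 0 p.
Proof.
apply: lt_le_trans (bsum_ge_term 0 (@wa_ge0 _ c) p_gt1).
by rewrite /wa add0n orbit1 /weight_a /= ltr01 expr1n.
Qed.

Lemma next_return (n : nat) : (p < n)%N -> xcoord n = 0 ->
  exists p2, [/\ (p.+1 < p2)%N, xcoord p2 = 0 &
                 forall m, (p < m < p2)%N -> xcoord m != 0].
Proof.
move=> pn xn; have hex : exists m, (p < m)%N && (xcoord m == 0).
  by exists n; rewrite pn xn eqxx.
case: (ex_minnP hex) => p2 /andP[pp2 /eqP x2] p2_min; exists p2; split=> //.
- rewrite ltn_neqAle pp2 andbT; apply/eqP => e; move: x2; rewrite -e.
  have [lam lam0 [_ ->]] := first_passage.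
  by move/eqP; rewrite /= oppr_eq0 gt_eqF.
- move=> m /andP[pm mp2]; apply/eqP => xm.
  by have := p2_min m; rewrite pm xm eqxx leqNgt mp2 => /(_ isT).
Qed.

End FirstPassage.

Section ReturnToAxis.
Variables (R : realType) (c : R * R) (p p2 t n : nat).
Local Notation orb := (Defs.orbit c).
Local Notation xcoord t := (orb t).1.

Hypothesis p_gt1 : (1 < p)%N.
Hypothesis x_pos : forall i, (0 < i < p)%N -> 0 < xcoord i.
Hypothesis x_p : xcoord p = 0.
Hypotheses (p2_gt : (p.+1 < p2)%N) (x_p2 : xcoord p2 = 0).
Hypothesis no_zero : forall m, (p < m < p2)%N -> xcoord m != 0.
Hypotheses (p_le_t : (p <= t)%N) (t_lt_n : (t < n)%N).
Hypotheses (x_t : xcoord t = 0) (x_n : xcoord n = 0) (y_n : 0 <= (orb n).2).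

(* Return on L^-: the orbit is a rescaled copy of itself with period p2,
   whose zeros are the times i p2 and i p2 + p. *)
Lemma return_to_Lminus : (orb p2).2 < 0 -> cross (vertex c t) (vertex c n) != 0.
Proof.
move=> y2_neg; set k := - (orb p2).2; have k0 : 0 < k by rewrite oppr_gt0.
have HT : orb (0 + p2) = scale k (orb 0).
  by rewrite add0n /scale /= mulr0 mulrN1 opprK -x_p2; case: (orb p2).
have p2_gt0 : (0 < p2)%N by lia.
have zeros m : xcoord m = 0 ->
    exists i, m = (0 + i * p2 + 0)%N \/ m = (0 + i * p2 + p)%N.
  move=> xm; have [em xr] := zero_residue k0 p2_gt0 HT (leq0n m) xm.
  rewrite subn0 add0n in em; rewrite subn0 add0n in xr.
  exists (m %/ p2)%N; rewrite !add0n.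
  have r_lt : (m %% p2 < p2)%N by rewrite ltn_pmod.
  case: (ltngtP (m %% p2) p) => [r_lt_p|r_gt_p|r_p]; last by right; rewrite -r_p.
    left; case: (posnP (m %% p2)) => [r0|r_gt0]; first by rewrite {1}em r0.
    suff : 0 < xcoord (m %% p2)%N by rewrite xr ltxx.
    by apply: x_pos; rewrite r_gt0 r_lt_p.
  suff : xcoord (m %% p2)%N != 0 by rewrite xr eqxx.
  by apply: no_zero; rewrite r_gt_p r_lt.
have [K [en|en]] := zeros n x_n.
  move: y_n; rewrite en (orbit_rescaled k0 HT) /= mulrN1 oppr_ge0.
  by rewrite leNgt exprn_gt0.
have Ea : 0 < bsum (wa c) 0 p := bsum_wa_first_passage c p_gt1.
have Yb : 0 < bsum (wb c) 0 p2.
  apply: lt_le_trans (wb_after_first_passage p_gt1 x_pos x_p) _.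
  by have := bsum_ge_term 0 (@wb_ge0 _ c) p2_gt; rewrite add0n.
have rho_gt0 : 0 < k ^+ 2 by rewrite exprn_gt0.
have [i [et|et]] := zeros t x_t.
- have i_gt0 : (0 < i)%N by move: p_le_t; rewrite et; case: i {et} => //; lia.
  have -> : cross (vertex c t) (vertex c n) =
      - (geom (k ^+ 2) i * bsum (wb c) 0 p2 * (k ^+ 2) ^+ K * bsum (wa c) 0 p).
    rewrite et en !(vertex_rescaled k0 HT) /cross /= !bsum0.
    by rewrite (bsum_wb_first_passage x_pos); ring.
  by rewrite oppr_eq0 gt_eqF // !mulr_gt0 ?exprn_gt0 ?geom_gt0.
- have [d eK] : exists d, K = (i + d.+1)%N.
    by exists (K - i).-1; move: t_lt_n; rewrite et en; nia.
  rewrite {}eK in en.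
  have -> : cross (vertex c t) (vertex c n) =
      bsum (wa c) 0 p * bsum (wb c) 0 p2 * ((k ^+ 2) ^+ i * geom (k ^+ 2) d.+1).
    rewrite et en !(vertex_rescaled k0 HT) /cross /= !bsum0.
    by rewrite (bsum_wb_first_passage x_pos) geom_split exprD; ring.
  by rewrite gt_eqF // !mulr_gt0 ?exprn_gt0 ?geom_gt0.
Qed.

(* Return on L^+: from time p on the orbit is a rescaled copy of itself with
   period p2 - p, whose zeros are the times p + i (p2 - p). *)
Lemma return_to_Lplus : 0 < (orb p2).2 -> cross (vertex c t) (vertex c n) != 0.
Proof.
move=> y2_pos; have [lam lam0 [op _]] := first_passage p_gt1 x_pos x_p.
set k := (orb p2).2 / lam; have k0 : 0 < k by rewrite divr_gt0.
set T := (p2 - p)%N; have T_gt1 : (1 < T)%N by rewrite /T; lia.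
have HT : orb (p + T) = scale k (orb p).
  rewrite subnKC; last by lia.
  by rewrite op /scale /= mulr0 divfK ?gt_eqF // -x_p2; case: (orb p2).
have zeros m : (p <= m)%N -> xcoord m = 0 -> exists i, m = (p + i * T + 0)%N.
  move=> pm xm; have [em xr] := zero_residue k0 (ltnW T_gt1) HT pm xm.
  exists ((m - p) %/ T)%N.
  case: (posnP ((m - p) %% T)%N) => [r0|r_gt0]; first by rewrite {1}em r0.
  suff : xcoord (p + (m - p) %% T)%N != 0 by rewrite xr eqxx.
  apply: no_zero; move: r_gt0 (ltn_pmod (m - p) (ltnW T_gt1)); rewrite /T; lia.
have [K en] := zeros n (ltnW (leq_ltn_trans p_le_t t_lt_n)) x_n.
have [i et] := zeros t p_le_t x_t.
have [d eK] : exists d, K = (d.+1 + i)%N.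
  by exists (K - i).-1; move: t_lt_n; rewrite et en; nia.
rewrite {}eK in en.
have rho_gt0 : 0 < k ^+ 2 by rewrite exprn_gt0.
have Ea : 0 < bsum (wa c) 0 p := bsum_wa_first_passage c p_gt1.
have Yb : 0 < bsum (wb c) p T.
  apply: lt_le_trans (wb_after_first_passage p_gt1 x_pos x_p) _.
  by have := bsum_ge_term p (@wb_ge0 _ c) T_gt1; rewrite addn1.
have -> : cross (vertex c t) (vertex c n) =
    bsum (wa c) 0 p * bsum (wb c) p T * ((k ^+ 2) ^+ i * geom (k ^+ 2) d.+1).
  rewrite et en !(vertex_rescaled k0 HT) /cross /= !bsum0.
  by rewrite (bsum_wb_first_passage x_pos) geom_split; ring.
by rewrite gt_eqF // !mulr_gt0 ?exprn_gt0 ?geom_gt0.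
Qed.

End ReturnToAxis.

Lemma orbit_polygonal_nondegenerate (R : realType) (c : R * R) (p t n : nat) :
  (1 < p)%N -> (forall i, (0 < i < p)%N -> 0 < (Defs.orbit c i).1) ->
  (Defs.orbit c p).1 = 0 -> (p <= t)%N -> (t < n)%N ->
  (Defs.orbit c t).1 = 0 -> (Defs.orbit c n).1 = 0 -> 0 <= (Defs.orbit c n).2 ->
  cross (vertex c t) (vertex c n) != 0.
Proof.
move=> p_gt1 x_pos x_p p_le_t t_lt_n x_t x_n y_n.
have [p2 [p2_gt x_p2 no_zero]] :=
  next_return p_gt1 x_pos x_p (leq_ltn_trans p_le_t t_lt_n) x_n.
have y2_neq0 : (Defs.orbit c p2).2 != 0.
  apply/eqP => y2; apply: (orbit_neq0 (c := c) (t := p2)).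
  by case: (Defs.orbit c p2) x_p2 y2 => /= ? ? -> ->.
case: (ltrgtP (Defs.orbit c p2).2 0) => [y2_neg|y2_pos|y2_0].
- exact: (return_to_Lminus p_gt1 x_pos x_p p2_gt x_p2 no_zero p_le_t t_lt_n).
- exact: (return_to_Lplus p_gt1 x_pos x_p p2_gt x_p2 no_zero p_le_t t_lt_n).
- by rewrite y2_0 eqxx in y2_neq0.
Qed.

Lemma filter_iota_head (P : pred nat) (m l h : nat) (r : seq nat) :
  [seq j <- iota m l | P j] = h :: r ->
  [/\ (m <= h)%N, (h < m + l)%N, P h & forall j, (m <= j < h)%N -> ~~ P j].
Proof.
elim: l m => [|l IH] m //=; case: ifP => Pm.
  case=> <- _; split=> //; first by rewrite addnS ltnS leq_addr.
  by move=> j /andP[a b]; move: (leq_ltn_trans a b); rewrite ltnn.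
move=> /IH [h1 h2 h3 h4]; split=> //; first exact: ltnW.
  by rewrite addnS -addSn.
move=> j /andP[hj1 hj2]; case: (eqVneq j m) => [->|ne]; first by rewrite Pm.
by apply: h4; rewrite hj2 andbT ltn_neqAle eq_sym ne.
Qed.

Lemma rank1_constant (u : word) : rank u = 1%N ->
  forall i, (i < size u)%N -> nth La u i = nth La u 0.
Proof.
rewrite /rank => /eqP; rewrite -{2}[1%N]addn0 eqn_add2l big_mkord.
move=> /eqP/eqP; rewrite sum_nat_seq_eq0 => /allP no_switch.
elim=> [//|i IH] hi; rewrite -IH ?(ltnW hi) //; apply/esym/eqP.
have hi' : (i < (size u).-1)%N by rewrite -ltnS prednK // (leq_ltn_trans _ hi).
by move: (no_switch (Ordinal hi')); rewrite mem_index_enum /= eqb0 negbK => /(_ isT).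
Qed.

Section PolygonalOfWord.
Variables (R : realType) (w : word) (c : R * R).

Lemma Gamma_origin : Gamma w c 0 = (0, 0).
Proof. by rewrite /Gamma !big_nat1 /Q /= expr0n !if_same. Qed.

Lemma Gamma_repeat (t : nat) :
  (0 < t)%N -> Gamma w c t = Gamma w c t.-1 -> Q w c t = 0.
Proof.
case: t => // t _; rewrite /Gamma /= !(big_nat_recr t.+1) //=.
have add_id (A a : R) : A + a = A -> a = 0.
  by move=> /(canRL (addKr A)); rewrite addNr.
case=> /add_id ea /add_id eb; apply/eqP; rewrite -sqrf_eq0.
by move: ea eb; case: (nth La w t.+1) => /= [-> _|_ ->].
Qed.

Lemma first_intersection (t : nat) : (0 < t < size w)%N -> Q w c t = 0 ->
  exists p r, [/\ Tseq w c = p :: r, (0 < p <= t)%N, Q w c p = 0 &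
                  forall j, (0 < j < p)%N -> Q w c j != 0].
Proof.
move=> /andP[t_gt0 t_lt_n] Qt.
have tT : t \in Tseq w c.
  by rewrite mem_filter Qt eqxx mem_iota t_gt0 add1n prednK // (leq_ltn_trans _ t_lt_n).
case eT : (Tseq w c) tT => [//|p r] _; exists p, r.
have [p_gt0 _ /eqP Qp before_p] := filter_iota_head eT.
split=> //.
rewrite p_gt0 leqNgt; apply/negP => t_lt_p.
by have := before_p t; rewrite t_gt0 t_lt_p Qt eqxx => /(_ isT).
Qed.

End PolygonalOfWord.

(* If p is the first intersection time and w agrees up to p with a word of
   rank 1, the orbit stays in the open right half-plane before p: the common
   letter is the letter a read at time 1, where the orbit is at (1, 0). *)
Lemma positive_before_first_intersection (R : realType) (c : R * R)
    (w u : word) (p : nat) :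
  follows c w -> rank u = 1%N -> equiv_at c (take p w) u -> (p < size w)%N ->
  (forall j, (0 < j < p)%N -> (Defs.orbit c j).1 != 0) ->
  forall i, (0 < i < p)%N -> 0 < (Defs.orbit c i).1.
Proof.
move=> Hw ru [size_u equ] p_lt_n x_nz.
have w_reads_orbit i : (i < p)%N -> (Defs.orbit c i).1 != 0 ->
    nth La w i = letter_of (Defs.orbit c i).
  move=> ip xi; case: (eqVneq (nth La w i) (letter_of (Defs.orbit c i))) => // /eqP hne.
  by rewrite (Hw i (ltn_trans ip p_lt_n) hne) eqxx in xi.
have w_is_u i : (i < p)%N -> (Defs.orbit c i).1 != 0 -> nth La w i = nth La u i.
  move=> ip xi; rewrite -(nth_take _ ip).
  case: (eqVneq (nth La (take p w) i) (nth La u i)) => // /eqP hne.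
  have size_take_p : size (take p w) = p by rewrite size_take p_lt_n.
  by move: xi; rewrite (equ i _ hne) ?size_take_p ?eqxx.
move=> i /andP[i_gt0 i_lt_p]; have xi := x_nz i (introT andP (conj i_gt0 i_lt_p)).
have one_lt_p : (1 < p)%N by apply: leq_trans i_lt_p.
have x1 : (Defs.orbit c 1).1 != 0 by rewrite orbit1 oner_neq0.
have u_const := rank1_constant ru; rewrite -size_u size_take p_lt_n in u_const.
rewrite -letter_off_axis // -w_reads_orbit // w_is_u // u_const //.
by rewrite -(u_const 1%N) // -w_is_u // w_reads_orbit // orbit1 /letter_of /in_a ltr01.
Qed.

Theorem mainTheorem12 (R : realType) (w : word) (c : R * R) :
  odd (rank w) -> legal w c -> T_simple w c -> regular w c.
Proof.
move=> _ Hlegal Hsimple t /andP[t_gt0 t_lt_n] Hrep Hseg.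
have Hw := legal_follows Hlegal; have [_ [[x_n y_n] _]] := Hlegal.
have Q_x j : (j <= size w)%N -> Q w c j = (Defs.orbit c j).1 by exact: Q_orbit.
have Qt := Gamma_repeat t_gt0 Hrep.
have [p [r [eT /andP[p_gt0 p_le_t] Qp Q_nz]]] :=
  first_intersection (introT andP (conj t_gt0 t_lt_n)) Qt.
have p_lt_n : (p < size w)%N := leq_ltn_trans p_le_t t_lt_n.
have x_nz j : (0 < j < p)%N -> (Defs.orbit c j).1 != 0.
  by move=> jp; rewrite -Q_x ?Q_nz // (leq_trans _ (ltnW p_lt_n)) // ltnW; case/andP: jp.
case: Hsimple => [|[u [ru equ]]]; first by rewrite eT.
rewrite eT /= in equ.
have x_pos := positive_before_first_intersection Hw ru equ p_lt_n x_nz.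
have p_gt1 : (1 < p)%N.
  rewrite ltn_neqAle p_gt0 andbT; apply/eqP => p1.
  by move: Qp; rewrite Q_x ?(ltnW p_lt_n) // -p1 orbit1 => /eqP; rewrite oner_eq0.
have x_p : (Defs.orbit c p).1 = 0 by rewrite -Q_x // ltnW.
have x_t : (Defs.orbit c t).1 = 0 by rewrite -Q_x // ltnW.
have := orbit_polygonal_nondegenerate p_gt1 x_pos x_p p_le_t t_lt_n x_t x_n y_n.
apply/negP/negPn/eqP/on_segment_origin; move: Hseg.
have n_gt0 : (0 < size w)%N := leq_ltn_trans (leq0n t) t_lt_n.
have t_le_n : (t <= size w)%N := ltnW t_lt_n.
by rewrite Gamma_origin Hrep !(Gamma_orbit Hw) ?prednK.
Qed.
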